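(* Let $K,A,B$ be sets and let $\mathrm{null}$ be an element not in $A\cup B$. Let $S$ be the set of finite sets $s$ of triples $(k,a,b)$ with $k\in K$, $a\in A\cup\{\mathrm{null}\}$, $b\in B\cup\{\mathrm{null}\}$, such that no two distinct triples of $s$ have the same first component and no triple has $a=b=\mathrm{null}$. Let $V$ (resp. $W$) be the set of finite sets of pairs in $K\times A$ (resp. $K\times B$) in which no two distinct pairs have the same first component. Define $f:S\to V$, $f(s)=\{(k,a):(k,a,b)\in s,\ a\neq\mathrm{null}\}$ and $c:S\to W$, $c(s)=\{(k,b):(k,a,b)\in s,\ b\neq\mathrm{null}\}$. Then: (1) the map $s\mapsto (f(s),c(s))$ is a bijection $S\to V\times W$; (2) for every complete set $U$ of updates on $V$, setting $T(u)(s)$ to be the unique $s'\in S$ with $f(s')=u(f(s))$ and $c(s')=c(s)$ defines a translator $T$ for $f$; (3) for this $T$, $s\equiv s'$ implies $c(s)=c(s')$; and if moreover for all $x,y\in V$ there is $u\in U$ with $u(x)=y$, then $s\equiv s'$ if and only if $c(s)=c(s')$, so the classes of $S/{\equiv}$ are in one-to-one correspondence with $W$ (the states of the projection onto the $K$ and $B$ columns, restricted to non-null $B$).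
   Context: This models a table with key column $K$ and columns $A,B$, the view being the projection onto $(K,A)$ restricted to rows with non-null $A$. The translator $T$ in (2) corresponds to the row-level strategy: inserting $(k,a)$ in the view sets the $A$ column of the base row with key $k$ to $a$ if that row exists, and otherwise inserts $(k,a,\mathrm{null})$; deleting $(k,a)$ from the view sets the $A$ column of that base row to $\mathrm{null}$, deleting the base row if its $B$ column is also $\mathrm{null}$. Definitions: for a surjective map $f:S\to V$, a set $U$ of maps $V\to V$ is a complete set of updates if (a) $u,v\in U$ implies $v\circ u\in U$, and (b) for every $u\in U$ and $x\in V$ there is $w\in U$ with $w(u(x))=x$. A map $t:S\to S$ is a translation of $u:V\to V$ if $f\circ t=u\circ f$ and $u(f(s))=f(s)$ implies $t(s)=s$ for all $s\in S$. A translator for $f$ (with respect to a complete set $U$) assigns to each $u\in U$ a translation $T(u)$ of $u$ such that $T(u\circ v)=T(u)\circ T(v)$. The induced equivalence on $S$ is: $s\equiv s'$ iff $s=T(u)(s')$ for some $u\in U$. *)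

From mathcomp Require Import all_boot.
From mathcomp Require Import boolp classical_sets functions cardinality.
Set Implicit Arguments. Unset Strict Implicit. Unset Printing Implicit Defensive.
Local Open Scope classical_set_scope.

Definition complete_updates (V : Type) (U : set (V -> V)) : Prop :=
  (forall u v, U u -> U v -> U (v \o u)) /\
  (forall u x, U u -> exists2 w, U w & w (u x) = x).

Definition translation (S V : Type) (f : S -> V) (u : V -> V) (t : S -> S) : Prop :=
  (forall s, f (t s) = u (f s)) /\ (forall s, u (f s) = f s -> t s = s).

Definition translator (S V : Type) (f : S -> V) (U : set (V -> V))
  (T : (V -> V) -> S -> S) : Prop :=
  (forall u, U u -> translation f u (T u)) /\
  (forall u v, U u -> U v -> T (u \o v) = T u \o T v).

Definition tequiv (S V : Type) (U : set (V -> V)) (T : (V -> V) -> S -> S)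
  (s s' : S) : Prop := exists2 u, U u & s = T u s'.

Section Table.
Variables (K A B : Type).

(* null is modelled by None : the column domains are option A, option B *)
Definition triple := (K * option A * option B)%type.

Definition is_state (s : set triple) : Prop :=
  [/\ finite_set s,
      (forall t t', s t -> s t' -> t.1.1 = t'.1.1 -> t = t') &
      (forall k, ~ s (k, None, None))].

Definition is_kv (X : Type) (v : set (K * X)) : Prop :=
  finite_set v /\ (forall p q, v p -> v q -> p.1 = q.1 -> p = q).

Definition Sst := {s : set triple | is_state s}.
Definition Vst := {v : set (K * A) | is_kv v}.
Definition Wst := {w : set (K * B) | is_kv w}.

Definition f_raw (s : set triple) : set (K * A) :=
  [set p | exists b, s (p.1, Some p.2, b)].
Definition c_raw (s : set triple) : set (K * B) :=
  [set p | exists a, s (p.1, a, Some p.2)].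

Lemma f_raw_kv s : is_state s -> is_kv (f_raw s).
Proof.
case=> fs uniq _; split.
  pose h (t : triple) : option (K * A) :=
    if t.1.2 is Some a then Some (t.1.1, a) else None.
  have -> : f_raw s = Some @^-1` (h @` s).
    apply/seteqP; split=> [[k a] [b sb]|[k a] [t st]].
      by exists (k, Some a, b).
    rewrite /h; case: t st => [[k' [a'|] b']] st //= [<- <-]; by exists b'.
  apply: finite_preimage; last exact: finite_image.
  by move=> x y _ _ [].
move=> [k a] [k' a'] [b sb] [b' sb'] /= ek; subst k'.
by have [->] := uniq _ _ sb sb' erefl.
Qed.

Lemma c_raw_kv s : is_state s -> is_kv (c_raw s).
Proof.
case=> fs uniq _; split.
  pose h (t : triple) : option (K * B) :=
    if t.2 is Some b then Some (t.1.1, b) else None.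
  have -> : c_raw s = Some @^-1` (h @` s).
    apply/seteqP; split=> [[k b] [a sa]|[k b] [t st]].
      by exists (k, a, Some b).
    rewrite /h; case: t st => [[k' a'] [b'|]] st //= [<- <-]; by exists a'.
  apply: finite_preimage; last exact: finite_image.
  by move=> x y _ _ [].
move=> [k b] [k' b'] [a sa] [a' sa'] /= ek; subst k'.
by have [_ ->] := uniq _ _ sa sa' erefl.
Qed.

Definition fmap (s : Sst) : Vst := exist _ (f_raw (proj1_sig s)) (f_raw_kv (proj2_sig s)).
Definition cmap (s : Sst) : Wst := exist _ (c_raw (proj1_sig s)) (c_raw_kv (proj2_sig s)).

End Table.

From mathcomp Require Import all_boot.
From mathcomp Require Import boolp classical_sets functions cardinality.
Set Implicit Arguments. Unset Strict Implicit. Unset Printing Implicit Defensive.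
Local Open Scope classical_set_scope.

(* The view f together with its complement c determines a state: every pair
   (v, w) of key-value sets is realised by exactly one table, obtained by
   joining v and w on the key.  Hence an update u of the view can be
   translated by keeping c constant, T(u)(s) := (f, c)^-1 (u (f s), c s);
   functoriality and the translation axioms follow from injectivity of
   (f, c), and T(u) never changes c.  Conversely, when U acts transitively
   on V, two states with the same complement are related by the translation
   of an update sending one view to the other. *)

Section ConstantComplement.
Variables (S V W : Type) (f : S -> V) (c : S -> W).
Hypothesis fc_bij : bijective (fun s => (f s, c s)).

Lemma view_complement_inj s s' : f s = f s' -> c s = c s' -> s = s'.
Proof. by move=> ef ec; apply: (bij_inj fc_bij) => /=; rewrite ef ec. Qed.

Lemma constant_complement_translation_exists :
  exists T : (V -> V) -> S -> S, forall u s, f (T u s) = u (f s) /\ c (T u s) = c s.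
Proof.
have [g _ fcK] := fc_bij.
exists (fun u s => g (u (f s), c s)) => u s.
by have [-> ->] := fcK (u (f s), c s).
Qed.

Variables (U : set (V -> V)) (T : (V -> V) -> S -> S).
Hypothesis T_spec : forall u s, f (T u s) = u (f s) /\ c (T u s) = c s.

Lemma constant_complement_translator : translator f U T.
Proof.
split=> [u _|u v _ _].
  split=> [s|s fix_s]; first by have [] := T_spec u s.
  have [ef ec] := T_spec u s.
  by apply: view_complement_inj; rewrite ?ef ?ec.
apply: funext => s /=.
have [ef_uv ec_uv] := T_spec (u \o v) s.
have [ef_u ec_u] := T_spec u (T v s).
have [ef_v ec_v] := T_spec v s.
by apply: view_complement_inj; rewrite ?ef_uv ?ef_u ?ef_v ?ec_uv ?ec_u ?ec_v.
Qed.

Lemma tequiv_complement s s' : tequiv U T s s' -> c s = c s'.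
Proof. by case=> u _ ->; have [] := T_spec u s'. Qed.

Lemma tequivE_complement :
  (forall x y, exists2 u, U u & u x = y) ->
  forall s s', tequiv U T s s' <-> c s = c s'.
Proof.
move=> U_trans s s'; split; first exact: tequiv_complement.
move=> ec; have [u Uu ef] := U_trans (f s') (f s).
exists u => //; have [ef' ec'] := T_spec u s'.
by apply: view_complement_inj; rewrite ?ef' ?ec' ?ef.
Qed.

End ConstantComplement.

Section JoinOnKey.
Variables (K A B : Type).

(* [lookup v k None] holds when the key k is absent from v: this is how a
   null column of the base table is read off a view. *)
Definition lookup (X : Type) (v : set (K * X)) (k : K) (o : option X) : Prop :=
  if o is Some x then v (k, x) else ~ exists x, v (k, x).

Lemma lookup_uniq (X : Type) (v : set (K * X)) k o o' :
  is_kv v -> lookup v k o -> lookup v k o' -> o = o'.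
Proof.
case=> _ v_uniq; case: o => [x|]; case: o' => [x'|] //= vx vx'.
- by have [->] := v_uniq _ _ vx vx' erefl.
- by case: vx'; exists x.
- by case: vx; exists x'.
Qed.

Lemma lookup_finite (X : Type) (v : set (K * X)) (D : set K) :
  finite_set v -> finite_set D ->
  finite_set [set p : K * option X | lookup v p.1 p.2 /\ D p.1].
Proof.
move=> fin_v fin_D.
apply: (@sub_finite_set _ _
  ((fun q : K * X => (q.1, Some q.2)) @` v `|` (fun k => (k, None)) @` D)).
  by move=> [k [x|]] /= [vx Dk]; [left; exists (k, x) | right; exists k].
by rewrite finite_setU; split; apply: finite_image.
Qed.

Definition join_on_key (v : set (K * A)) (w : set (K * B)) : set (triple K A B) :=
  fun t => [/\ lookup v t.1.1 t.1.2, lookup w t.1.1 t.2 & (t.1.2 <> None \/ t.2 <> None)].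

Lemma join_on_key_state v w : is_kv v -> is_kv w -> is_state (join_on_key v w).
Proof.
move=> v_kv w_kv; split.
- pose D := fst @` v `|` fst @` w.
  have fin_D : finite_set D.
    by rewrite finite_setU; split; apply: finite_image; [case: v_kv | case: w_kv].
  apply: (@sub_finite_set _ _ [set (p.1, p.2, q.2) | p in
      [set p : K * option A | lookup v p.1 p.2 /\ D p.1] &
    q in [set q : K * option B | lookup w q.1 q.2 /\ D q.1]]).
    move=> [[k oa] ob] [/= va wb a_or_b].
    have Dk : D k.
      case: oa va a_or_b => [a va _|_ [//|]]; first by left; exists (k, a).
      by case: ob wb => [b wb _|//]; right; exists (k, b).
    by exists (k, oa) => //; exists (k, ob).
  by apply: finite_image2; apply: lookup_finite => //; [case: v_kv | case: w_kv].
- move=> [[k oa] ob] [[k' oa'] ob'] [/= va wb _] [/= va' wb' _] ek; subst k'.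
  by rewrite (lookup_uniq v_kv va va') (lookup_uniq w_kv wb wb').
- by move=> k [/= _ _ []] [].
Qed.

Lemma f_raw_join v w : is_kv v -> f_raw (join_on_key v w) = v.
Proof.
move=> v_kv; rewrite predeqE => -[k a]; split; first by case=> b [].
move=> vka; have [[b wkb]|no_b] := pselect (exists b, w (k, b)).
  by exists (Some b); split => //; left.
by exists None; split => //; left.
Qed.

Lemma c_raw_join v w : is_kv w -> c_raw (join_on_key v w) = w.
Proof.
move=> w_kv; rewrite predeqE => -[k b]; split; first by case=> a [].
move=> wkb; have [[a vka]|no_a] := pselect (exists a, v (k, a)).
  by exists (Some a); split => //; right.
by exists None; split => //; right.
Qed.

Lemma join_f_c_raw s : is_state s -> join_on_key (f_raw s) (c_raw s) = s.
Proof.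
case=> _ s_uniq no_null; rewrite predeqE => -[[k oa] ob]; split; last first.
  move=> st; split => /=.
  - case: oa st => [a|] st; first by exists ob.
    by case=> a [b' st']; have [] := s_uniq _ _ st st' erefl.
  - case: ob st => [b|] st; first by exists oa.
    by case=> b [a' st']; have [] := s_uniq _ _ st st' erefl.
  - case: oa st => [a|] st; first by left.
    by case: ob st => [b|] st; [right | case: (no_null k)].
case=> /=; case: oa => [a|]; case: ob => [b|] //=.
- by move=> [b' st] [a' st'] _; have [_ <-] := s_uniq _ _ st st' erefl.
- move=> [[b'|] st] no_b _ //.
  by case: no_b; exists b'; exists (Some a).
- move=> no_a [[a'|] st] _ //.
  by case: no_a; exists a'; exists (Some b).
- by move=> _ _ [].
Qed.

Definition join_state (p : Vst K A * Wst K B) : Sst K A B :=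
  exist _ (join_on_key (proj1_sig p.1) (proj1_sig p.2))
    (join_on_key_state (proj2_sig p.1) (proj2_sig p.2)).

Lemma fmap_cmap_bijective : bijective (fun s : Sst K A B => (fmap s, cmap s)).
Proof.
exists join_state.
  by move=> [s s_state]; apply: eq_exist; exact: join_f_c_raw.
move=> [[v v_kv] [w w_kv]]; congr pair; apply: eq_exist.
  exact: f_raw_join.
exact: c_raw_join.
Qed.

End JoinOnKey.

Theorem mainTheorem4 (K A B : Type) :
  (* (1) s |-> (f s, c s) is a bijection S -> V x W *)
  bijective (fun s : Sst K A B => (fmap s, cmap s)) /\
  (* (2),(3) for every complete set U of updates on V *)
  (forall U : set (Vst K A -> Vst K A), complete_updates U ->
    (* T(u)(s) = the unique s' with f s' = u (f s) and c s' = c s exists *)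
    (exists T : (Vst K A -> Vst K A) -> Sst K A B -> Sst K A B,
       forall u s, fmap (T u s) = u (fmap s) /\ cmap (T u s) = cmap s) /\
    (forall T : (Vst K A -> Vst K A) -> Sst K A B -> Sst K A B,
       (forall u s, fmap (T u s) = u (fmap s) /\ cmap (T u s) = cmap s) ->
       translator (@fmap K A B) U T /\
       (forall s s', tequiv U T s s' -> cmap s = cmap s') /\
       ((forall x y : Vst K A, exists2 u, U u & u x = y) ->
          forall s s', tequiv U T s s' <-> cmap s = cmap s'))).
Proof.
have fc_bij := @fmap_cmap_bijective K A B.
split=> // U _; split.
  exact: constant_complement_translation_exists fc_bij.
move=> T T_spec; split; last split.
- exact: (constant_complement_translator fc_bij U T_spec).
- exact: tequiv_complement T_spec.
- exact: (tequivE_complement (U := U) fc_bij T_spec).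
Qed.
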